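(* For every positive integer $n$, $C_S(x^n y^n) = K[x^n y^n]$.
   Context: Standing conventions: $K$ is a field, $R = K[y]$, $\sigma$ is a $K$-algebra endomorphism of $R$ with $\deg_y(\sigma(y)) > 1$, and $\delta$ is a $K$-linear $\sigma$-derivation of $R$ ($\delta(ab) = \sigma(a)\delta(b) + \delta(a)b$). $S = R[x;\sigma,\delta]$ is the Ore extension (polynomials $\sum r_i x^i$, $r_i\in R$, with $xr = \sigma(r)x + \delta(r)$). $C_S(P)$ is the centralizer of $P$ in $S$, and $K[P] = \{\sum_i c_i P^i : c_i \in K\}$. *)

From HB Require Import structures.
From mathcomp Require Import all_boot all_order all_algebra.
Set Implicit Arguments. Unset Strict Implicit. Unset Printing Implicit Defensive.
Import GRing.Theory.
Local Open Scope ring_scope.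

(* Ore extension S = R[x; sigma, delta] with R = K[y] = {poly K}.
   An element  sum_i r_i x^i  (r_i in R) is represented by its coefficient
   list, i.e. by p : {poly {poly K}} with p`_i = r_i.  Only the additive
   structure of {poly {poly K}} is meaningful; the Ore product is [ore_mul]. *)

Section Ore.
Variable K : fieldType.
Variable sigma : {poly K} -> {poly K}.
Variable delta : {poly K} -> {poly K}.

(* left multiplication by x:  x * (sum_j s_j x^j) = sum_j (sigma s_j x^(j+1) + delta s_j x^j) *)
Definition ore_mulx (p : {poly {poly K}}) : {poly {poly K}} :=
  map_poly sigma p * 'X + map_poly delta p.

(* (sum_i r_i x^i) * g = sum_i r_i (x^i g);  r *: h multiplies each coefficient on the left by r *)
Definition ore_mul (f g : {poly {poly K}}) : {poly {poly K}} :=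
  \sum_(i < size f) f`_i *: iter i ore_mulx g.

Definition ore_pow (P : {poly {poly K}}) (n : nat) : {poly {poly K}} :=
  iter n (ore_mul P) 1.

Definition ore_centralizer (P : {poly {poly K}}) : pred {poly {poly K}} :=
  fun Q => ore_mul P Q == ore_mul Q P.

Definition ore_KP (P Q : {poly {poly K}}) : Prop :=
  exists cs : seq K, Q = \sum_(i < size cs) (cs`_i)%:P *: ore_pow P i.

End Ore.

(* Leading terms multiply in S as
       lead (f g) = lead f * sigma^(deg_x f) (lead g),
   so P = x^n y^n has x-degree n and leading coefficient p = sigma^n (y^n).
   If Q, of x-degree m and leading coefficient q, commutes with P, comparing
   leading coefficients gives  p sigma^n(q) = q sigma^m(p).  Since sigma
   multiplies y-degrees by d, the y-degrees yield
       deg q * d^n + n d^n = deg q + n d^n d^m,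
   i.e. d^n - 1 divides n (d^m - 1); passing to g = gcd(m, n) and bounding
   sizes turns this into n | m, say m = k n.  The power
   P^k satisfies the same identity, whence sigma^n(q) l = q sigma^n(l) for its
   leading coefficient l; such a twisted relation forces q = c l with c in K.
   Thus Q - c P^k commutes with P and has smaller x-degree: induction on the
   x-degree shows that the centralizer is K[P].  The converse inclusion is the
   associativity of the Ore product. *)

From HB Require Import structures.
From mathcomp Require Import all_boot all_order all_algebra.
From mathcomp Require Import zify.
Set Implicit Arguments.
Unset Strict Implicit.
Unset Printing Implicit Defensive.
Import GRing.Theory.

Section ExponentArithmetic.
Variable d : nat.
Hypothesis d_gt1 : 1 < d.

Lemma double_leq_expn g : 2 * g <= d ^ g.
Proof.
elim: g => [|g IH]; first by rewrite expn0.
have pos : 0 < d ^ g by rewrite expn_gt0 ltnW.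
by rewrite expnS; move: IH pos; generalize (d ^ g) => u; nia.
Qed.

(* If 0 < g and 2g <= N then N (d^g - 1) < d^N - 1; applied to a proper
   divisor g of N, this rules out proper divisors in [dvd_expn_sub1]. *)
Lemma mul_expn_sub1_lt g N : 0 < g -> 2 * g <= N -> N * (d ^ g - 1) < d ^ N - 1.
Proof.
move=> g_gt0 /subnK <-; elim: (N - 2 * g) => [|k IH].
  have u_ge := double_leq_expn g.
  rewrite add0n mul2n -addnn expnD.
  by move: u_ge; generalize (d ^ g) => u; nia.
have u_le : d ^ g <= d ^ (k + 2 * g) by rewrite leq_pexp2l ?(ltnW d_gt1) //; lia.
rewrite addSn expnS mulSn addnC; move: IH u_le.
by generalize (d ^ (k + 2 * g)) ((k + 2 * g) * (d ^ g - 1)) (d ^ g) => v w u; nia.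
Qed.

Lemma expn_sub1_split k a b :
  k * (d ^ (a + b) - 1) = d ^ a * (k * (d ^ b - 1)) + k * (d ^ a - 1).
Proof.
have u_gt0 : 0 < d ^ a by rewrite expn_gt0 ltnW.
have v_gt0 : 0 < d ^ b by rewrite expn_gt0 ltnW.
have k_le : k <= k * d ^ a by rewrite leq_pmulr.
have ku_le : k * d ^ a <= k * d ^ a * d ^ b by rewrite leq_pmulr.
rewrite expnD !mulnBr !muln1 mulnA [d ^ a * k]mulnC mulnCA mulnA; lia.
Qed.

(* For fixed c and k, the exponents a with c | k (d^a - 1) are closed under
   sums, differences and multiples, hence under gcd. *)
Lemma dvd_expn_sub1D c k a b :
  c %| k * (d ^ a - 1) -> c %| k * (d ^ b - 1) -> c %| k * (d ^ (a + b) - 1).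
Proof. by move=> ca cb; rewrite expn_sub1_split dvdn_add // dvdn_mull. Qed.

Lemma dvd_expn_sub1B c k a b : b <= a ->
  c %| k * (d ^ a - 1) -> c %| k * (d ^ b - 1) -> c %| k * (d ^ (a - b) - 1).
Proof.
move=> /subnK <-; rewrite addnK expn_sub1_split => + cb.
by rewrite dvdn_addr // dvdn_mull.
Qed.

Lemma dvd_expn_sub1M c k a j : c %| k * (d ^ a - 1) -> c %| k * (d ^ (a * j) - 1).
Proof.
move=> ca; elim: j => [|j IH]; first by rewrite muln0 expn0 subnn muln0 dvdn0.
by rewrite mulnS dvd_expn_sub1D.
Qed.

Lemma dvd_expn_sub1_gcd c k m n :
  c %| k * (d ^ m - 1) -> c %| k * (d ^ n - 1) -> c %| k * (d ^ gcdn m n - 1).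
Proof.
move=> cm cn; have [->|m_gt0] := posnP m; first by rewrite gcd0n.
have [a _ /dvdnP [j gcd_eq]] := Bezoutl n m_gt0.
have -> : gcdn m n = m * j - n * a.
  by rewrite [m * j]mulnC -gcd_eq [n * a]mulnC addnK.
rewrite dvd_expn_sub1B ?dvd_expn_sub1M //.
by rewrite [m * j]mulnC -gcd_eq [n * a]mulnC leq_addl.
Qed.

(* d^n - 1 | n (d^m - 1) forces n | m: the divisibility passes to g = gcd m n,
   and for g < n the size bound [mul_expn_sub1_lt] contradicts it. *)
Lemma dvd_expn_sub1 n m : 0 < n -> d ^ n - 1 %| n * (d ^ m - 1) -> n %| m.
Proof.
move=> n_gt0 dvd_m.
have dvd_g : d ^ n - 1 %| n * (d ^ gcdn m n - 1).
  by rewrite dvd_expn_sub1_gcd // dvdn_mull.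
have [g_lt|g_gt|g_eq] := ltngtP (gcdn m n) n; last by rewrite -g_eq dvdn_gcdl.
- have g_gt0 : 0 < gcdn m n by rewrite gcdn_gt0 n_gt0 orbT.
  have [t n_eq] := dvdnP (dvdn_gcdr m n).
  set g := gcdn m n in g_lt g_gt0 n_eq dvd_g *.
  have two_g : 2 * g <= n.
    have t_gt1 : 1 < t by move: g_lt; rewrite n_eq -{1}(mul1n g) ltn_pmul2r.
    by rewrite n_eq leq_mul2r t_gt1 orbT.
  have pos : 0 < n * (d ^ g - 1).
    by rewrite muln_gt0 n_gt0 subn_gt0 -(expn0 d) ltn_exp2l.
  by move: (dvdn_leq pos dvd_g); rewrite leqNgt mul_expn_sub1_lt.
- by move: (dvdn_leq n_gt0 (dvdn_gcdr m n)); rewrite leqNgt g_gt.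
Qed.

(* The y-degree identity coming from commuting leading coefficients forces
   n | m; d^n - 1 is coprime to d^n, so the factor d^n can be dropped. *)
Lemma degree_balance n m e : 0 < n ->
  e * d ^ n + n * d ^ n = e + n * d ^ n * d ^ m -> n %| m.
Proof.
move=> n_gt0 bal; apply: (dvd_expn_sub1 n_gt0).
have Dn_ge2 : 2 <= d ^ n.
  by apply: (leq_trans d_gt1); rewrite -{1}(expn1 d) leq_pexp2l // ltnW.
have Dm_ge1 : 1 <= d ^ m by rewrite expn_gt0 ltnW.
have coprime_D : coprime (d ^ n - 1) (d ^ n).
  by rewrite subn1; apply: coprimePn; move: Dn_ge2; generalize (d ^ n); lia.
have bal' : (d ^ n - 1) * e = n * (d ^ m - 1) * d ^ n.
  by move: bal Dn_ge2 Dm_ge1; generalize (d ^ n) (d ^ m) => u v; nia.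
by rewrite -(Gauss_dvdl _ coprime_D) -bal' dvdn_mulr.
Qed.

End ExponentArithmetic.

Local Open Scope ring_scope.

Lemma size_leq_top0 (R : nzSemiRingType) (r : {poly R}) N :
  (size r <= N.+1)%N -> r`_N = 0 -> (size r <= N)%N.
Proof.
move=> /leq_sizeP r_small rN; apply/leq_sizeP => j.
by rewrite leq_eqVlt => /orP [/eqP <- // | /r_small].
Qed.

Section OreExtension.
Variable K : fieldType.
Variable sigma : {rmorphism {poly K} -> {poly K}}.
Hypothesis sigma_K : forall c : K, sigma c%:P = c%:P.
Variable delta : {poly K} -> {poly K}.
Hypothesis delta_lin :
  forall (c : K) (a b : {poly K}), delta (c *: a + b) = c *: delta a + delta b.
Hypothesis delta_der : forall a b : {poly K}, delta (a * b) = sigma a * delta b + delta a * b.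

Local Notation mulx := (ore_mulx sigma delta).
Local Notation omul := (ore_mul sigma delta).

Lemma delta0 : delta 0 = 0.
Proof.
have := delta_lin 1 0 0; rewrite !scale1r addr0 -{1}[delta 0]addr0.
by move/addrI.
Qed.

Lemma deltaD a b : delta (a + b) = delta a + delta b.
Proof. by have := delta_lin 1 a b; rewrite !scale1r. Qed.

Lemma deltaC c : delta c%:P = 0.
Proof.
have delta1 : delta 1 = 0.
  have := delta_der 1 1; rewrite !mulr1 rmorph1 mul1r -{1}[delta 1]addr0.
  by move/addrI.
by rewrite -alg_polyC -[c%:A]addr0 delta_lin delta1 delta0 scaler0 addr0.
Qed.

Lemma mulxD g h : mulx (g + h) = mulx g + mulx h.
Proof.
apply/polyP=> i; rewrite /ore_mulx.
rewrite !(coefD, coefMX, coef_map_id0 _ _ (rmorph0 sigma), coef_map_id0 _ _ delta0).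
by case: (i == 0%N); rewrite ?add0r ?rmorphD deltaD // addrACA.
Qed.

Lemma mulxZ r g : mulx (r *: g) = sigma r *: mulx g + delta r *: g.
Proof.
apply/polyP=> i; rewrite /ore_mulx.
rewrite !(coefD, coefZ, coefMX, coef_map_id0 _ _ (rmorph0 sigma), coef_map_id0 _ _ delta0).
case: (i == 0%N); rewrite ?mulr0 ?add0r ?rmorphM ?delta_der //.
by rewrite mulrDr addrA.
Qed.

Lemma iter_mulxD i g h : iter i mulx (g + h) = iter i mulx g + iter i mulx h.
Proof. by elim: i => //= i ->; rewrite mulxD. Qed.

Lemma iter_mulx0 i : iter i mulx 0 = 0.
Proof. by apply: (addIr (iter i mulx 0)); rewrite -iter_mulxD !add0r. Qed.

Lemma iter_mulxC i (c : K) g : iter i mulx (c%:P *: g) = c%:P *: iter i mulx g.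
Proof. by elim: i => //= i ->; rewrite mulxZ sigma_K deltaC scale0r addr0. Qed.

Lemma iter_mulx1 i : iter i mulx 1 = 'X^i.
Proof.
elim: i => //= i ->; rewrite /ore_mulx.
have -> : map_poly delta 'X^i = 0.
  apply/polyP=> j; rewrite coef_map_id0 ?delta0 // coefXn coef0.
  by case: (j == i); rewrite ?deltaC ?delta0.
by rewrite addr0 rmorphXn /= map_polyX exprSr.
Qed.

Lemma ore_mulE N (f g : {poly {poly K}}) : (size f <= N)%N ->
  omul f g = \sum_(i < N) f`_i *: iter i mulx g.
Proof.
move=> fN; rewrite /ore_mul (big_ord_widen _ (fun i => f`_i *: iter i mulx g) fN).
rewrite big_mkcond; apply: eq_bigr => i _.
by case: ifP => // /negbT; rewrite -leqNgt => /(nth_default 0) ->; rewrite scale0r.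
Qed.

Lemma ore_mul0l g : omul 0 g = 0.
Proof. by rewrite /ore_mul size_poly0 big_ord0. Qed.

Lemma ore_mulDl f1 f2 g : omul (f1 + f2) g = omul f1 g + omul f2 g.
Proof.
set N := maxn (size f1) (size f2).
rewrite !(ore_mulE (N := N)) ?leq_maxl ?leq_maxr //; last exact: leq_trans (size_polyD _ _) _.
by rewrite -big_split /=; apply: eq_bigr => i _; rewrite coefD scalerDl.
Qed.

Lemma ore_mulZl r f g : omul (r *: f) g = r *: omul f g.
Proof.
rewrite !(ore_mulE (N := size f)) ?size_scale_leq //.
by rewrite scaler_sumr; apply: eq_bigr => i _; rewrite coefZ scalerA.
Qed.

Lemma ore_mul0r f : omul f 0 = 0.
Proof. by rewrite /ore_mul big1 // => i _; rewrite iter_mulx0 scaler0. Qed.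

Lemma ore_mulDr f g h : omul f (g + h) = omul f g + omul f h.
Proof.
by rewrite /ore_mul -big_split; apply: eq_bigr => i _; rewrite iter_mulxD scalerDr.
Qed.

Lemma ore_mulCr f (c : K) g : omul f (c%:P *: g) = c%:P *: omul f g.
Proof.
rewrite /ore_mul scaler_sumr; apply: eq_bigr => i _.
by rewrite iter_mulxC !scalerA mulrC.
Qed.

Lemma ore_mul_suml I (r : seq I) (F : I -> {poly {poly K}}) g :
  omul (\sum_(i <- r) F i) g = \sum_(i <- r) omul (F i) g.
Proof. exact: (big_morph (omul^~ g) (fun a b => ore_mulDl a b g) (ore_mul0l g)). Qed.

Lemma ore_mul_sumr I (r : seq I) (F : I -> {poly {poly K}}) f :
  omul f (\sum_(i <- r) F i) = \sum_(i <- r) omul f (F i).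
Proof. exact: (big_morph (omul f) (ore_mulDr f) (ore_mul0r f)). Qed.

Lemma ore_mul1l g : omul 1 g = g.
Proof. by rewrite /ore_mul size_poly1 big_ord1 coef1 /= scale1r. Qed.

Lemma ore_mul1r f : omul f 1 = f.
Proof.
rewrite /ore_mul; under eq_bigr do rewrite iter_mulx1.
by rewrite -poly_def coefK.
Qed.

Lemma coef_mulx f i :
  (mulx f)`_i = (if i is j.+1 then sigma f`_j else 0) + delta f`_i.
Proof.
rewrite /ore_mulx coefD coefMX (coef_map_id0 _ _ delta0).
by case: i => [|i] //=; rewrite (coef_map_id0 _ _ (rmorph0 sigma)).
Qed.

Lemma size_mulx_leq f : (size (mulx f) <= (size f).+1)%N.
Proof.
rewrite /ore_mulx; apply: leq_trans (size_polyD _ _) _; rewrite geq_max.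
apply/andP; split; last by rewrite /map_poly; apply: leq_trans (size_poly _ _) _.
apply: leq_trans (size_polyMleq _ _) _.
by rewrite size_polyX addn2 ltnS /map_poly; exact: size_poly.
Qed.

Lemma ore_mul_mulx f h : omul (mulx f) h = mulx (omul f h).
Proof.
rewrite (ore_mulE h (size_mulx_leq f)) /ore_mul (big_morph mulx mulxD (iter_mulx0 1)).
under [LHS]eq_bigr do rewrite coef_mulx scalerDl.
rewrite big_split /= big_ord_recl big_ord_recr /= scale0r add0r.
rewrite nth_default // delta0 scale0r addr0 -big_split /=.
by apply: eq_bigr => i _; rewrite mulxZ.
Qed.

Lemma ore_mulA f g h : omul (omul f g) h = omul f (omul g h).
Proof.
have iter_mul i f' : omul (iter i mulx f') h = iter i mulx (omul f' h).
  by elim: i => //= i IH; rewrite ore_mul_mulx IH.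
rewrite [omul f g]/ore_mul [omul f _]/ore_mul ore_mul_suml.
by apply: eq_bigr => i _; rewrite ore_mulZl iter_mul.
Qed.

Lemma ore_pow_comm P k : omul (ore_pow sigma delta P k) P = omul P (ore_pow sigma delta P k).
Proof.
elim: k => [|k IH]; first by rewrite /= ore_mul1l ore_mul1r.
by rewrite /= ore_mulA -[in RHS]IH.
Qed.

(* From now on sigma is nonconstant of degree d = deg sigma(y) > 1. *)
Hypothesis sigma_deg : (2 < size (sigma 'X))%N.
Local Notation d := (size (sigma 'X)).-1.

Lemma deg_sigmaX_gt1 : (1 < d)%N.
Proof. by case: (size (sigma 'X)) sigma_deg. Qed.

Lemma sigma_comp a : sigma a = a \Po sigma 'X.
Proof.
elim/poly_ind: a => [|a c IH]; first by rewrite rmorph0 comp_poly0.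
by rewrite rmorphD rmorphM IH sigma_K comp_polyD comp_polyM comp_polyX comp_polyC.
Qed.

Lemma iter_sigma_eq0 k a : (iter k sigma a == 0) = (a == 0).
Proof.
elim: k => //= k <-.
by rewrite sigma_comp comp_poly_eq0 // ltnW.
Qed.

Lemma deg_iter_sigma k a : (size (iter k sigma a)).-1 = ((size a).-1 * d ^ k)%N.
Proof.
elim: k => [|k IH] /=; first by rewrite expn0 muln1.
by rewrite sigma_comp size_comp_poly IH expnSr mulnA.
Qed.

Lemma iter_sigmaBCM k (c : K) a b :
  iter k sigma (a - c%:P * b) = iter k sigma a - c%:P * iter k sigma b.
Proof. by elim: k => //= k ->; rewrite rmorphB rmorphM sigma_K. Qed.

Lemma deg_mul (a b : {poly K}) : a != 0 -> b != 0 ->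
  (size (a * b)).-1 = ((size a).-1 + (size b).-1)%N.
Proof.
move=> a0 b0; rewrite size_mul //.
move: (size_poly_gt0 a) (size_poly_gt0 b); rewrite a0 b0.
by case: (size a) => // sa; case: (size b) => // sb _ _ /=; rewrite addnS.
Qed.

(* A "twisted commutation" sigma^k(a) b = a sigma^k(b) forces equal degrees,
   since deg a * d^k + deg b = deg a + deg b * d^k with d^k > 1. *)
Lemma twisted_size k a b : (0 < k)%N -> a != 0 -> b != 0 ->
  iter k sigma a * b = a * iter k sigma b -> size a = size b.
Proof.
move=> k_gt0 a0 b0 ab.
have ka0 : iter k sigma a != 0 by rewrite iter_sigma_eq0.
have kb0 : iter k sigma b != 0 by rewrite iter_sigma_eq0.
have := congr1 (fun r : {poly K} => (size r).-1) ab; rewrite /= !deg_mul // !deg_iter_sigma.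
have D_gt1 : (1 < d ^ k)%N by rewrite -(expn0 d) ltn_exp2l ?deg_sigmaX_gt1.
move: D_gt1; generalize (d ^ k)%N => D D_gt1 bal.
have deg_eq : (size a).-1 = (size b).-1.
  by move: bal; generalize (size a).-1 (size b).-1 => x y; nia.
have a_gt0 : (0 < size a)%N by rewrite size_poly_gt0.
have b_gt0 : (0 < size b)%N by rewrite size_poly_gt0.
by rewrite -(prednK a_gt0) -(prednK b_gt0) deg_eq.
Qed.

(* ... and in fact forces a and b to be proportional over K: subtracting the
   right multiple of b kills the top coefficient of a, and the difference still
   satisfies the twisted commutation, so it must vanish. *)
Lemma twisted_proportional k a b : (0 < k)%N -> a != 0 -> b != 0 ->
  iter k sigma a * b = a * iter k sigma b -> exists c : K, a = c%:P * b.
Proof.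
move=> k_gt0 a0 b0 ab; set c := lead_coef a / lead_coef b; exists c.
set r := a - c%:P * b.
have [/eqP|r0] := eqVneq r 0; first by rewrite subr_eq0 => /eqP.
have rb : iter k sigma r * b = r * iter k sigma b.
  by rewrite iter_sigmaBCM !mulrBl ab -!mulrA [iter k sigma b * b]mulrC.
have size_ab := twisted_size k_gt0 a0 b0 ab.
have size_rb := twisted_size k_gt0 r0 b0 rb.
have b_gt0 : (0 < size b)%N by rewrite size_poly_gt0.
have : (size r <= (size b).-1)%N.
  apply: size_leq_top0.
    rewrite prednK //; apply: leq_trans (size_polyD _ _) _.
    rewrite size_polyN geq_max size_ab leqnn /=.
    by rewrite mul_polyC size_scale_leq.
  rewrite coefB coefCM -{1}size_ab -!lead_coefE /c mulfVK ?subrr //.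
  by rewrite lead_coef_eq0.
by rewrite size_rb leqNgt ltn_predL b_gt0.
Qed.

Lemma lead_mulx h : h != 0 ->
  size (mulx h) = (size h).+1 /\ lead_coef (mulx h) = sigma (lead_coef h).
Proof.
move=> h0.
have sigma_lead0 : sigma (lead_coef h) != 0.
  by rewrite -[sigma _]/(iter 1 sigma _) iter_sigma_eq0 lead_coef_eq0.
have size_sigma_h : size (map_poly sigma h) = size h by rewrite size_map_poly_id0.
have sigma_h0 : map_poly sigma h != 0 by rewrite -size_poly_eq0 size_sigma_h size_poly_eq0.
have size_X : size (map_poly sigma h * 'X) = (size h).+1 by rewrite size_mulX // size_sigma_h.
have size_delta : (size (map_poly delta h) < size (map_poly sigma h * 'X)%R)%N.
  by rewrite size_X ltnS /map_poly; exact: size_poly.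
rewrite /ore_mulx size_polyDl // lead_coefDl // lead_coefMX lead_coef_map_id0 //.
exact: rmorph0.
Qed.

Lemma lead_iter_mulx i h : h != 0 ->
  size (iter i mulx h) = (size h + i)%N /\
  lead_coef (iter i mulx h) = iter i sigma (lead_coef h).
Proof.
move=> h0; elim: i => [|i [size_i lead_i]]; first by rewrite addn0.
have hi0 : iter i mulx h != 0 by rewrite -size_poly_eq0 size_i addn_eq0 size_poly_eq0 (negbTE h0).
have [size_Si lead_Si] := lead_mulx hi0.
by rewrite /= size_Si lead_Si size_i lead_i addnS.
Qed.

(* Only the top term f_s x^s h contributes to the leading term of f h. *)
Lemma lead_ore_mul f h : f != 0 -> h != 0 ->
  size (omul f h) = (size f + size h).-1 /\
  lead_coef (omul f h) = lead_coef f * iter (size f).-1 sigma (lead_coef h).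
Proof.
move=> f0 h0.
have size_f : size f = (size f).-1.+1 by rewrite prednK // size_poly_gt0.
set s := (size f).-1 in size_f *.
rewrite (ore_mulE h (eq_leq size_f)) big_ord_recr /=.
have [size_top lead_top] := lead_iter_mulx s h0.
have fs0 : f`_s != 0 by rewrite /s -lead_coefE lead_coef_eq0.
have size_last : size (f`_s *: iter s mulx h) = (size h + s)%N by rewrite size_scale.
have size_rest : (size (\sum_(i < s) f`_i *: iter i mulx h)%R < size h + s)%N.
  apply: (big_ind (fun x : {poly {poly K}} => size x < size h + s)%N).
  - by rewrite size_poly0 addn_gt0 size_poly_gt0 h0.
  - by move=> x y hx hy; apply: (leq_ltn_trans (size_polyD _ _)); rewrite gtn_max hx hy.
  - move=> i _; apply: (leq_ltn_trans (size_scale_leq _ _)).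
    by have [-> _] := lead_iter_mulx i h0; rewrite ltn_add2l.
rewrite addrC size_polyDl ?size_last // lead_coefDl ?size_last // lead_coefZ lead_top.
by rewrite lead_coefE -/s size_f addSn addnC.
Qed.

Variable n : nat.
Hypothesis n_gt0 : (0 < n)%N.

Local Notation P := (omul 'X^n ('X^n)%:P).
Local Notation pow := (ore_pow sigma delta P).
Local Notation p := (iter n sigma 'X^n).

Lemma lead_P : size P = n.+1 /\ lead_coef P = p.
Proof.
have Xn0 : ('X^n : {poly K}) != 0 by rewrite -size_poly_eq0 size_polyXn.
have XXn0 : ('X^n : {poly {poly K}}) != 0 by rewrite -size_poly_eq0 size_polyXn.
have CXn0 : ('X^n : {poly K})%:P != 0 by rewrite polyC_eq0.
have [-> ->] := lead_ore_mul XXn0 CXn0.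
by rewrite size_polyXn size_polyC Xn0 lead_coefXn mul1r lead_coefC addn1.
Qed.

Lemma P_neq0 : P != 0.
Proof. by rewrite -size_poly_eq0 (proj1 lead_P). Qed.

Lemma p_neq0 : p != 0.
Proof. by rewrite iter_sigma_eq0 -size_poly_eq0 size_polyXn. Qed.

Lemma size_pow k : size (pow k) = (k * n).+1.
Proof.
elim: k => [|k IH]; first by rewrite /= size_poly1.
have powk0 : pow k != 0 by rewrite -size_poly_eq0 IH.
have [-> _] := lead_ore_mul P_neq0 powk0.
by rewrite (proj1 lead_P) IH mulSn addSn addnS.
Qed.

Lemma lead_comm Q : Q != 0 -> omul P Q = omul Q P ->
  p * iter n sigma (lead_coef Q) = lead_coef Q * iter (size Q).-1 sigma p.
Proof.
move=> Q0 comm.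
have [_ lead_PQ] := lead_ore_mul P_neq0 Q0; have [_ lead_QP] := lead_ore_mul Q0 P_neq0.
by case: lead_P lead_PQ lead_QP => -> -> /= <- <-; rewrite comm.
Qed.

Lemma centralizer_deg_dvd Q : Q != 0 -> omul P Q = omul Q P -> (n %| (size Q).-1)%N.
Proof.
move=> Q0 comm.
have q0 : lead_coef Q != 0 by rewrite lead_coef_eq0.
have nq0 : iter n sigma (lead_coef Q) != 0 by rewrite iter_sigma_eq0.
have mp0 : iter (size Q).-1 sigma p != 0 by rewrite iter_sigma_eq0 p_neq0.
have := congr1 (fun r : {poly K} => (size r).-1) (lead_comm Q0 comm).
rewrite /= !deg_mul ?p_neq0 // !deg_iter_sigma size_polyXn /= addnC => bal.
exact: (degree_balance deg_sigmaX_gt1 n_gt0 bal).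
Qed.

Lemma centralizer_lead Q k : Q != 0 -> omul P Q = omul Q P -> (size Q).-1 = (k * n)%N ->
  exists c : K, lead_coef Q = c%:P * lead_coef (pow k).
Proof.
move=> Q0 comm deg_Q; set q := lead_coef Q; set l := lead_coef (pow k).
have powk0 : pow k != 0 by rewrite -size_poly_eq0 size_pow.
have q0 : q != 0 by rewrite lead_coef_eq0.
have l0 : l != 0 by rewrite lead_coef_eq0.
have lead_Q := lead_comm Q0 comm.
have lead_powk := lead_comm powk0 (esym (ore_pow_comm P k)).
rewrite size_pow /= -deg_Q in lead_powk.
apply: (twisted_proportional n_gt0 q0 l0); apply: (mulfI p_neq0).
by rewrite mulrA lead_Q -mulrA [_ * l]mulrC mulrA mulrCA lead_powk mulrA.
Qed.

Lemma centralizer_descent Q : Q != 0 -> omul P Q = omul Q P ->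
  exists (c : K) (k : nat), (size (Q + c%:P *: pow k)%R < size Q)%N.
Proof.
move=> Q0 comm.
have [k deg_Q] := dvdnP (centralizer_deg_dvd Q0 comm).
have [c lead_Q] := centralizer_lead Q0 comm deg_Q.
have size_Q : size Q = (k * n).+1 by rewrite -deg_Q prednK // size_poly_gt0.
exists (- c), k; rewrite size_Q ltnS; apply: size_leq_top0.
  apply: leq_trans (size_polyD _ _) _; rewrite geq_max size_Q leqnn /=.
  by apply: leq_trans (size_scale_leq _ _) _; rewrite size_pow.
have lead_pow : (pow k)`_(k * n) = lead_coef (pow k) by rewrite lead_coefE size_pow.
rewrite coefD coefZ lead_pow -deg_Q -lead_coefE lead_Q.
by rewrite polyCN mulNr addrN.
Qed.

Lemma ore_KP0 : ore_KP sigma delta P 0.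
Proof. by exists [::]; rewrite big_ord0. Qed.

Lemma ore_KP_add Q (c : K) k :
  ore_KP sigma delta P Q -> ore_KP sigma delta P (Q + c%:P *: pow k).
Proof.
case=> cs ->; set M := maxn (size cs) k.+1.
exists (mkseq (fun i => cs`_i + (if i == k then c else 0)) M); rewrite size_mkseq.
under [RHS]eq_bigr => i _ do rewrite nth_mkseq // polyCD scalerDl.
rewrite big_split /=; congr (_ + _).
  rewrite (big_ord_widen M (fun i => (cs`_i)%:P *: pow i) (leq_maxl _ _)) big_mkcond /=.
  apply: eq_bigr => i _; case: ltnP => // /(nth_default 0) ->.
  by rewrite scale0r.
have k_lt : (k < M)%N by rewrite leq_max leqnn orbT.
rewrite (bigD1 (Ordinal k_lt)) //= eqxx big1 ?addr0 // => i.
by rewrite -val_eqE /= => /negbTE ->; rewrite polyC0 scale0r.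
Qed.

Lemma ore_KP_comm Q : ore_KP sigma delta P Q -> omul P Q = omul Q P.
Proof.
case=> cs ->; rewrite ore_mul_sumr ore_mul_suml; apply: eq_bigr => i _.
by rewrite ore_mulCr ore_mulZl ore_pow_comm.
Qed.

Lemma centralizer_sub_KP Q : omul P Q = omul Q P -> ore_KP sigma delta P Q.
Proof.
move: {2}(size Q) (leqnn (size Q)) => N; elim: N Q => [|N IH] Q size_Q comm.
  by move: size_Q; rewrite leqn0 size_poly_eq0 => /eqP ->; exact: ore_KP0.
have [->|Q0] := eqVneq Q 0; first exact: ore_KP0.
have [c [k size_lt]] := centralizer_descent Q0 comm.
rewrite -[Q](addrK (c%:P *: pow k)) -scaleNr -polyCN; apply: ore_KP_add; apply: IH.
  by rewrite -ltnS (leq_trans size_lt).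
by rewrite ore_mulDr ore_mulDl ore_mulCr ore_mulZl comm ore_pow_comm.
Qed.

End OreExtension.

Theorem proposition5p8 (K : fieldType)
  (sigma : {rmorphism {poly K} -> {poly K}})
  (sigma_K : forall c : K, sigma c%:P = c%:P)
  (sigma_deg : (2 < size (sigma 'X))%N)
  (delta : {poly K} -> {poly K})
  (delta_lin : forall (c : K) (a b : {poly K}), delta (c *: a + b) = c *: delta a + delta b)
  (delta_der : forall a b : {poly K}, delta (a * b) = sigma a * delta b + delta a * b)
  (n : nat) (n_pos : (0 < n)%N) :
  let P := ore_mul sigma delta 'X^n ('X^n)%:P in
  forall Q : {poly {poly K}},
    Q \in ore_centralizer sigma delta P <-> ore_KP sigma delta P Q.
Proof.
move=> P Q; split => [/eqP|].
  exact: (centralizer_sub_KP sigma_K delta_lin delta_der sigma_deg n_pos).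
by move/(ore_KP_comm sigma_K delta_lin delta_der)/eqP.
Qed.
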